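(* Let $H=\left(\frac{3,-1}{\mathbb{Q}}\right)$ and let $d>0$ be a square-free integer for which the set $S_d=\{xI+yJ+zK: (x,y,z)\in\mathbb{Z}^3,\ 3x^2-y^2+3z^2=d\}$ is infinite. Let $\varphi_d:\mathbb{N}\to S_d$ be a bijection, and let $a,b>0$ be rational numbers such that $a+b\sqrt{d}$ is a unit of $\mathbb{Q}(\sqrt d)$ of infinite order. Define $\psi_d:\mathbb{N}^2\to H$ by $\psi_d(t,m)=\left(a+b\,\varphi_d(t)\right)^m$. Then the restriction of $\psi_d$ to $\mathbb{N}\times(\mathbb{N}\setminus\{0\})$ is injective.
   Context: $\mathbb{N}=\{0,1,2,\dots\}$. $H=\left(\frac{3,-1}{\mathbb{Q}}\right)$ is the quaternion $\mathbb{Q}$-algebra with basis $1,I,J,K=IJ$ and relations $I^2=3$, $J^2=-1$, $IJ=-JI$; the reduced norm of $x_0+xI+yJ+zK$ is $x_0^2-3x^2+y^2-3z^2$. Elements $xI+yJ+zK$ are called pure quaternions; a pure quaternion $\omega\in S_d$ has reduced norm $-d$ and satisfies $\omega^2=d$. *)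

From HB Require Import structures.
From mathcomp Require Import all_boot all_order all_algebra all_field.
Set Implicit Arguments. Unset Strict Implicit. Unset Printing Implicit Defensive.
Import Order.TTheory GRing.Theory Num.Theory.
Local Open Scope ring_scope.

(* Elements x0 + x1 I + x2 J + x3 K of H = (3,-1 / Q), as 4-tuples of rationals. *)
Definition quat := (rat * rat * rat * rat)%type.

Definition qalpha : rat := 3.      (* I^2 = 3 *)
Definition qbeta  : rat := -1.     (* J^2 = -1 *)

Definition qone : quat := (1, 0, 0, 0).

(* Multiplication in the quaternion algebra (alpha, beta / Q), K = IJ. *)
Definition qmul (p q : quat) : quat :=
  let: (x0, x1, x2, x3) := p in
  let: (y0, y1, y2, y3) := q in
  (x0 * y0 + qalpha * x1 * y1 + qbeta * x2 * y2 - qalpha * qbeta * x3 * y3,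
   x0 * y1 + x1 * y0 - qbeta * x2 * y3 + qbeta * x3 * y2,
   x0 * y2 + x2 * y0 + qalpha * x1 * y3 - qalpha * x3 * y1,
   x0 * y3 + x3 * y0 + x1 * y2 - x2 * y1).

Fixpoint qpow (q : quat) (m : nat) : quat :=
  match m with
  | O => qone
  | S m' => qmul q (qpow q m')
  end.

Definition in_S (d : nat) (v : int * int * int) : Prop :=
  let: (x, y, z) := v in 3 * x ^+ 2 - y ^+ 2 + 3 * z ^+ 2 = (d%:Z).

Definition S_type (d : nat) := {v : int * int * int | in_S d v}.

Definition squarefree (d : nat) : Prop :=
  forall k : nat, (1 < k)%N -> ~~ (k ^ 2 %| d)%N.

Definition S_infinite (d : nat) : Prop :=
  ~ (exists s : seq (int * int * int), forall v, in_S d v -> v \in s).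

Definition lin_quat (a b : rat) (w : int * int * int) : quat :=
  let: (x, y, z) := w in (a, b * x%:~R, b * y%:~R, b * z%:~R).

Definition psi (d : nat) (phi : nat -> S_type d) (a b : rat) (t m : nat) : quat :=
  qpow (lin_quat a b (sval (phi t))) m.

From HB Require Import structures.
From mathcomp Require Import all_boot all_order all_algebra all_field.
From mathcomp Require Import ring.
Import Order.TTheory GRing.Theory Num.Theory.
Local Open Scope ring_scope.

(* A pure quaternion w = xI + yJ + zK satisfies w^2 = D, where
   D = 3x^2 - y^2 + 3z^2, and w commutes with the rationals.  Hence, writing
   (a + b sqrt D)^m = A_m + B_m sqrt D, the power (a + b w)^m equals A_m + B_m w:
   the map a + b sqrt D |-> a + b w is a ring morphism from Q(sqrt D).  For
   a, b > 0 all coefficients are positive, so B_m > 0 as soon as m > 0.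
   If (a + b w1)^m1 = (a + b w2)^m2 with w1, w2 in S_d, comparing the scalar
   and pure parts gives A_m1 = A_m2 and B_m1 w1 = B_m2 w2; taking the form of
   both sides gives B_m1^2 d = B_m2^2 d, so B_m1 = B_m2 and w1 = w2, whence
   t1 = t2 since phi is injective.  Then (a + b sqrt d)^m1 = (a + b sqrt d)^m2
   in algC, and since this unit has infinite order, m1 = m2. *)

(* The quadratic form of H on pure quaternions: w^2 = pure_form x y z. *)
Definition pure_form (x y z : rat) : rat := 3 * x ^+ 2 - y ^+ 2 + 3 * z ^+ 2.

(* Coefficients (A_m, B_m) of (a + b sqrt D)^m = A_m + B_m sqrt D, computed by
   the recursion given by multiplication by a + b sqrt D. *)
Fixpoint pow_coeffs (a b D : rat) (m : nat) : rat * rat :=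
  match m with
  | O => (1, 0)
  | S m' =>
      let: (A, B) := pow_coeffs a b D m' in (a * A + b * D * B, a * B + b * A)
  end.

Lemma pow_coeffsE {R : numFieldType} (a b : rat) {D : rat} {s : R} (m : nat) :
  s ^+ 2 = ratr D ->
  ratr (pow_coeffs a b D m).1 + ratr (pow_coeffs a b D m).2 * s =
  (ratr a + ratr b * s) ^+ m.
Proof.
move=> sD; elim: m => [|m IH] /=; first by rewrite rmorph0 rmorph1 mul0r addr0.
rewrite exprS -IH; case: (pow_coeffs a b D m) => A B /=.
rewrite !rmorphD !rmorphM /= -sD; ring.
Qed.

Lemma qpow_pure (a b : rat) {x y z D : rat} (m : nat) :
  pure_form x y z = D ->
  qpow (a, b * x, b * y, b * z) m =
  ((pow_coeffs a b D m).1, (pow_coeffs a b D m).2 * x,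
   (pow_coeffs a b D m).2 * y, (pow_coeffs a b D m).2 * z).
Proof.
move=> wD; elim: m => [|m IH] /=; first by rewrite /qone !mul0r.
rewrite IH; case: (pow_coeffs a b D m) => A B /=.
rewrite /qalpha /qbeta -wD /pure_form; congr (_, _, _, _); ring.
Qed.

(* For a, b > 0 and D >= 0 the pure coefficient B_m is positive once m > 0;
   along the way A_m > 0 and B_m >= 0 for all m. *)
Lemma pow_coeffs_pos {a b D : rat} (m : nat) : 0 < a -> 0 < b -> 0 <= D ->
  (0 < m)%N -> 0 < (pow_coeffs a b D m).2.
Proof.
move=> a_gt0 b_gt0 D_ge0.
have step A B : 0 < A -> 0 <= B -> 0 < a * B + b * A.
  by move=> A_gt0 B_ge0; rewrite ltr_wpDl ?mulr_gt0 // mulr_ge0 // ltW.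
have coeffs_ge0 n : 0 < (pow_coeffs a b D n).1 /\ 0 <= (pow_coeffs a b D n).2.
  elim: n => [|n] /=; first by rewrite ltr01.
  case: (pow_coeffs a b D n) => A B [A_gt0 B_ge0] /=.
  split; last exact: ltW (step _ _ A_gt0 B_ge0).
  by rewrite ltr_wpDr ?mulr_gt0 // !mulr_ge0 // ltW.
case: m => [|m] //= _; have := coeffs_ge0 m.
by case: (pow_coeffs a b D m) => A B /= [A_gt0 B_ge0]; apply: step.
Qed.

Lemma scaled_pure_eq {B1 B2 x1 y1 z1 x2 y2 z2 D : rat} :
  D != 0 -> 0 < B1 -> 0 < B2 ->
  pure_form x1 y1 z1 = D -> pure_form x2 y2 z2 = D ->
  B1 * x1 = B2 * x2 -> B1 * y1 = B2 * y2 -> B1 * z1 = B2 * z2 ->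
  B1 = B2 /\ (x1, y1, z1) = (x2, y2, z2).
Proof.
move=> D_neq0 B1_gt0 B2_gt0 form1 form2 ex ey ez.
have sqB : B1 ^+ 2 * D = B2 ^+ 2 * D.
  rewrite -{1}form1 -form2 /pure_form.
  transitivity (3 * (B1 * x1) ^+ 2 - (B1 * y1) ^+ 2 + 3 * (B1 * z1) ^+ 2); first ring.
  by rewrite ex ey ez; ring.
have eB : B1 = B2.
  by apply/eqP; rewrite -(eqrXn2 (n:=2)) ?ltW //; apply/eqP/(mulIf D_neq0).
subst B2; have B1_neq0 : B1 != 0 by rewrite gt_eqF.
by split => //; rewrite (mulfI B1_neq0 ex) (mulfI B1_neq0 ey) (mulfI B1_neq0 ez).
Qed.

Lemma expr_inj_infinite_order {R : idomainType} {u : R} {m1 m2 : nat} :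
  u != 0 -> (forall n : nat, (0 < n)%N -> u ^+ n != 1) ->
  u ^+ m1 = u ^+ m2 -> m1 = m2.
Proof.
move=> u_neq0 u_inf.
wlog le_m12 : m1 m2 / (m1 <= m2)%N.
  by move=> W; case: (leqP m1 m2) => [|/ltnW] /W // W' /esym /W'.
move=> eu; apply/eqP; rewrite eqn_leq le_m12 leqNgt; apply/negP => lt_m12.
have /negP[] : u ^+ (m2 - m1) != 1 by apply: u_inf; rewrite subn_gt0.
have um1_neq0 : u ^+ m1 != 0 by rewrite expf_neq0.
by apply/eqP/(mulfI um1_neq0); rewrite -exprD subnKC // mulr1 eu.
Qed.

Lemma S_type_form {d : nat} (w : S_type d) :
  let: (x, y, z) := sval w in pure_form x%:~R y%:~R z%:~R = d%:R.
Proof.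
case: w => [[[x y] z] /= inS]; rewrite /pure_form.
have -> : (d%:R : rat) = (d%:Z)%:~R by [].
by rewrite -inS !(rmorphD, rmorphN, rmorphM, rmorphXn).
Qed.

Lemma S_type_val_inj (d : nat) : injective (@sval _ (in_S d)).
Proof.
move=> [[[x y] z] p] [w q] /= evw; subst w; congr exist; exact: eq_irrelevance.
Qed.

Lemma psiE {d : nat} (phi : nat -> S_type d) (a b : rat) (t m : nat) :
  let: (x, y, z) := sval (phi t) in
  psi phi a b t m =
  ((pow_coeffs a b d%:R m).1, (pow_coeffs a b d%:R m).2 * x%:~R,
   (pow_coeffs a b d%:R m).2 * y%:~R, (pow_coeffs a b d%:R m).2 * z%:~R).
Proof.
rewrite /psi; have := S_type_form (phi t).
by case: (sval (phi t)) => [[x y] z] /(qpow_pure a b m) <-.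
Qed.

Theorem mainTheorem4 (d : nat) (phi : nat -> S_type d) (a b : rat) :
  (0 < d)%N -> squarefree d -> S_infinite d ->
  bijective phi ->
  0 < a -> 0 < b ->
  (* a + b sqrt d, seen in Q(sqrt d) inside algC, is nonzero of infinite order *)
  (ratr a + ratr b * sqrtC (d%:R) : algC) != 0 ->
  (forall n : nat, (0 < n)%N -> (ratr a + ratr b * sqrtC (d%:R) : algC) ^+ n != 1) ->
  forall t1 t2 m1 m2 : nat, (0 < m1)%N -> (0 < m2)%N ->
    psi phi a b t1 m1 = psi phi a b t2 m2 -> t1 = t2 /\ m1 = m2.
Proof.
move=> d_gt0 _ _ phi_bij a_gt0 b_gt0 u_neq0 u_inf t1 t2 m1 m2 m1_gt0 m2_gt0.
have d_neq0 : (d%:R : rat) != 0 by rewrite pnatr_eq0 -lt0n.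
have d_ge0 : (0 : rat) <= d%:R by rewrite ler0n.
have B1_gt0 := pow_coeffs_pos m1 a_gt0 b_gt0 d_ge0 m1_gt0.
have B2_gt0 := pow_coeffs_pos m2 a_gt0 b_gt0 d_ge0 m2_gt0.
have sqrt_d : sqrtC (d%:R : algC) ^+ 2 = ratr d%:R by rewrite sqrtCK ratr_nat.
have := pow_coeffsE a b m1 sqrt_d; have := pow_coeffsE a b m2 sqrt_d.
have := psiE phi a b t1 m1; have := psiE phi a b t2 m2.
have := S_type_form (phi t1); have := S_type_form (phi t2).
have t_of_val : sval (phi t1) = sval (phi t2) -> t1 = t2.
  by move/S_type_val_inj/(bij_inj phi_bij).
move: t_of_val B1_gt0 B2_gt0.
case: (sval (phi t1)) => [[x1 y1] z1]; case: (sval (phi t2)) => [[x2 y2] z2].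
case: (pow_coeffs a b d%:R m1) => A1 B1; case: (pow_coeffs a b d%:R m2) => A2 B2 /=.
move=> t_of_val B1_gt0 B2_gt0 form2 form1 -> -> pow2 pow1 [eA ex ey ez].
have [eB [/intr_inj ex' /intr_inj ey' /intr_inj ez']] :=
  scaled_pure_eq d_neq0 B1_gt0 B2_gt0 form1 form2 ex ey ez.
split; first by apply: t_of_val; rewrite ex' ey' ez'.
by apply: (expr_inj_infinite_order u_neq0 u_inf); rewrite -pow1 -pow2 eA eB.
Qed.
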